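(* Let $S\ni h$ be a $2$-admissible polarized lattice of degree $h^2=8$, $\Delta$ a Weyl chamber for $\operatorname{rt}(S,h)$, $\bar P$ the corresponding closed fundamental polyhedron, and $\Gamma=\operatorname{Fn}_\Delta(S,h)$. Then the star $\operatorname{Star}(e)$ of $e$ is as follows: (1) if $e\in\Gamma$ is a line, $\operatorname{Star}(e)\cong\mathbf{A}_2\oplus a\mathbf{A}_1$ with $a\le3$, or $\operatorname{Star}(e)\cong a\mathbf{A}_1$ with $a\le8$; (2) if $e\in\Gamma$ is a line and $S\ni h$ is $3$-admissible, $\operatorname{Star}(e)\cong a\mathbf{A}_1$ with $a\le7$; (3) if $e\in\mathfrak{b}(\Delta)$ is an exceptional divisor, $\operatorname{Star}(e)\cong a\mathbf{A}_1$ with $a\le5$; (4) if $e\in\bar P$ is a $3$-isotropic vector, $\operatorname{Star}(e)\cong\mathbf{A}_2$ or $\operatorname{Star}(e)\cong a\mathbf{A}_1$ with $a\le9$.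
   Context: All lattices even; $(S,h)$ polarized: $S$ hyperbolic, $h^2>0$. $\operatorname{root}_n(S,h)=\{r: r^2=-2,\ r\cdot h=n\}$, $\operatorname{rt}(S,h)$ spanned by $\operatorname{root}_0(S,h)$. A Weyl chamber $\Delta$ has positive roots $P_\Delta$ and simple roots $\mathfrak{b}(\Delta)$ (exceptional divisors). $\bar P=\{v\in S\otimes\mathbb{R}: v^2\ge0,\ v\cdot h\ge0,\ v\cdot r\ge0 \text{ for } r\in P_\Delta \text{ and all roots } r \text{ with } r\cdot h>0\}$. The Fano graph $\Gamma=\operatorname{Fn}_\Delta(S,h)=\{l\in\operatorname{root}_1(S,h): l\cdot e\ge0\ \forall e\in\mathfrak{b}(\Delta)\}$ (elements: lines), with edges of multiplicity $l_1\cdot l_2$. $w$ is $m$-isotropic if $w^2=0$, $w\cdot h=m$; $2$-admissible: no $1$- or $2$-isotropic vector; $3$-admissible: in addition no $3$-isotropic vector. $\operatorname{Star}(e)=\{l\in\Gamma: l\cdot e=1\}$ as an induced subgraph of $\Gamma$. $a\mathbf{A}_1$ denotes the graph of $a$ isolated vertices, and $\mathbf{A}_2\oplus a\mathbf{A}_1$ the disjoint union of a single edge with $a$ isolated vertices. *)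

From HB Require Import structures.
From mathcomp Require Import all_boot all_order all_algebra.
Set Implicit Arguments. Unset Strict Implicit. Unset Printing Implicit Defensive.
Import Order.TTheory GRing.Theory Num.Theory.
Local Open Scope ring_scope.

(* A lattice of rank n is Z^n (column vectors) with Gram matrix G. *)
Section Lattice.
Variable n : nat.
Variable G : 'M[int]_n.

Definition vec := 'cV[int]_n.

Definition lform (x y : vec) : int := (x^T *m G *m y) ord0 ord0.

Definition formQ (x y : 'cV[rat]_n) : rat :=
  (x^T *m map_mx intr G *m y) ord0 ord0.

Definition toQ (x : vec) : 'cV[rat]_n := map_mx intr x.

Definition even_lattice : Prop :=
  G^T = G /\ forall i, (2 %| G i i)%Z.

(* hyperbolic: signature (1, n-1) (Sylvester: diagonalisation over Q) *)
Definition hyperbolic : Prop :=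
  exists P : 'M[rat]_n, P \in unitmx /\
    let D := P^T *m map_mx intr G *m P in
    (forall i j, i != j -> D i j = 0) /\
    exists i0, 0 < D i0 i0 /\ forall i, i != i0 -> D i i < 0.

Variable h : vec.

Definition is_root_n (k : int) (r : vec) : Prop := lform r r = -2 /\ lform r h = k.

Definition isotropic (m : int) (w : vec) : Prop := lform w w = 0 /\ lform w h = m.

Definition two_admissible : Prop :=
  forall w, ~ isotropic 1 w /\ ~ isotropic 2 w.

Definition three_admissible : Prop :=
  two_admissible /\ forall w, ~ isotropic 3 w.

(* A Weyl chamber Delta of rt(S,h) is represented by a generic rational
   vector v (not orthogonal to any root of root_0(S,h)); the chamber is the
   one containing (the projection to rt(S,h) (x) Q of) v. *)
Definition weyl_generic (v : 'cV[rat]_n) : Prop :=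
  forall r, is_root_n 0 r -> formQ (toQ r) v != 0.

Variable v : 'cV[rat]_n.

Definition pos_root (r : vec) : Prop := is_root_n 0 r /\ 0 < formQ (toQ r) v.

Definition simple_root (e : vec) : Prop :=
  pos_root e /\ ~ exists r1 r2, pos_root r1 /\ pos_root r2 /\ e = r1 + r2.

(* closed fundamental polyhedron Pbar, restricted to lattice vectors *)
Definition in_Pbar (w : vec) : Prop :=
  0 <= lform w w /\ 0 <= lform w h /\
  (forall r, pos_root r -> 0 <= lform w r) /\
  (forall r, lform r r = -2 -> 0 < lform r h -> 0 <= lform w r).

Definition is_line (l : vec) : Prop :=
  is_root_n 1 l /\ forall e, simple_root e -> 0 <= lform l e.

Definition in_star (e l : vec) : Prop := is_line l /\ lform l e = 1.

(* The induced subgraph on Star(e) (edge multiplicity l1.l2) is isomorphic to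
   the graph on 'I_m with edge multiplicities M. *)
Definition star_iso (e : vec) (m : nat) (M : 'I_m -> 'I_m -> int) : Prop :=
  exists f : 'I_m -> vec,
    injective f /\
    (forall l, in_star e l <-> exists i, f i = l) /\
    (forall i j, i != j -> lform (f i) (f j) = M i j).

End Lattice.

Definition aA1 (a : nat) : 'I_a -> 'I_a -> int := fun _ _ => 0.

Definition A2aA1 (a : nat) : 'I_a.+2 -> 'I_a.+2 -> int :=
  fun i j => if ((val i == 0%N) && (val j == 1%N)) || ((val i == 1%N) && (val j == 0%N))
             then 1 else 0.

Arguments aA1 a : clear implicits.
Arguments A2aA1 a : clear implicits.

From HB Require Import structures.
From mathcomp Require Import all_boot all_order all_algebra zify ring lra.
From Stdlib Require Import Classical.
Set Implicit Arguments. Unset Strict Implicit. Unset Printing Implicit Defensive.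
Import Order.TTheory GRing.Theory Num.Theory.
Local Open Scope ring_scope.

(* By the Hodge index theorem, h^2 = 8 gives 8 w^2 <= (w.h)^2 for every w.  Two
   distinct lines meet with multiplicity 0 or 1: larger values violate this
   inequality or 2-admissibility, and -1 would make l1 - l2 a root orthogonal to h
   separating two vectors of the closed chamber.  For each kind of e, suitable
   combinations of h, e and lines of Star(e) are then 2- or 3-isotropic, violate
   the Hodge inequality, or are roots orthogonal to h separating e from a line.
   This shows that Star(e) has at most one edge (none in cases (2) and (3)) and
   bounds the number of pairwise disjoint lines in it. *)

Section Bilinear.
Variables (n : nat) (G : 'M[int]_n).
Implicit Types x y z : 'cV[int]_n.

Lemma lformDl x y z : lform G (x + y) z = lform G x z + lform G y z.
Proof. by rewrite /lform linearD /= !mulmxDl mxE. Qed.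
Lemma lformDr x y z : lform G z (x + y) = lform G z x + lform G z y.
Proof. by rewrite /lform mulmxDr mxE. Qed.
Lemma lformZl (a : int) x y : lform G (a *: x) y = a * lform G x y.
Proof. by rewrite /lform linearZ /= -!scalemxAl mxE. Qed.
Lemma lformZr (a : int) x y : lform G x (a *: y) = a * lform G x y.
Proof. by rewrite /lform -scalemxAr mxE. Qed.
Lemma lformNl x y : lform G (- x) y = - lform G x y.
Proof. by rewrite -scaleN1r lformZl mulN1r. Qed.
Lemma lformNr x y : lform G x (- y) = - lform G x y.
Proof. by rewrite -scaleN1r lformZr mulN1r. Qed.
Lemma lformBl x y z : lform G (x - y) z = lform G x z - lform G y z.
Proof. by rewrite lformDl lformNl. Qed.
Lemma lformBr x y z : lform G z (x - y) = lform G z x - lform G z y.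
Proof. by rewrite lformDr lformNr. Qed.
Lemma lform0l y : lform G 0 y = 0.
Proof. by rewrite /lform linear0 !mul0mx mxE. Qed.

Lemma lform_suml (I : Type) (s : seq I) (F : I -> 'cV[int]_n) y :
  lform G (\sum_(i <- s) F i) y = \sum_(i <- s) lform G (F i) y.
Proof.
elim: s => [|a s IH]; first by rewrite !big_nil lform0l.
by rewrite !big_cons lformDl IH.
Qed.

Lemma lformC : G^T = G -> forall x y, lform G x y = lform G y x.
Proof.
move=> sG x y; have tr11 (M : 'M[int]_1) : M ord0 ord0 = M^T ord0 ord0 by rewrite mxE.
by rewrite /lform tr11 !trmx_mul trmxK sG mulmxA.
Qed.

Implicit Types X Y Z : 'cV[rat]_n.

Lemma formQDl X Y Z : formQ G (X + Y) Z = formQ G X Z + formQ G Y Z.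
Proof. by rewrite /formQ linearD /= !mulmxDl mxE. Qed.
Lemma formQDr X Y Z : formQ G Z (X + Y) = formQ G Z X + formQ G Z Y.
Proof. by rewrite /formQ mulmxDr mxE. Qed.
Lemma formQZl (a : rat) X Y : formQ G (a *: X) Y = a * formQ G X Y.
Proof. by rewrite /formQ linearZ /= -!scalemxAl mxE. Qed.
Lemma formQZr (a : rat) X Y : formQ G X (a *: Y) = a * formQ G X Y.
Proof. by rewrite /formQ -scalemxAr mxE. Qed.
Lemma formQNl X Y : formQ G (- X) Y = - formQ G X Y.
Proof. by rewrite -scaleN1r formQZl mulN1r. Qed.
Lemma formQNr X Y : formQ G X (- Y) = - formQ G X Y.
Proof. by rewrite -scaleN1r formQZr mulN1r. Qed.

Lemma formQC : G^T = G -> forall X Y, formQ G X Y = formQ G Y X.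
Proof.
move=> sG X Y; have tr11 (M : 'M[rat]_1) : M ord0 ord0 = M^T ord0 ord0 by rewrite mxE.
by rewrite /formQ tr11 !trmx_mul trmxK map_trmx sG mulmxA.
Qed.

Lemma lform_toQ x y : (lform G x y)%:~R = formQ G (toQ x) (toQ y).
Proof. by rewrite /lform /formQ /toQ map_trmx -!map_mxM [RHS]mxE. Qed.

Lemma toQ_inj0 x : toQ x = 0 -> x = 0.
Proof.
move=> /matrixP x0; apply/matrixP => i j; move: (x0 i j).
by rewrite !mxE => /eqP; rewrite intr_eq0 => /eqP.
Qed.

End Bilinear.

Lemma diag_bilinear (R : pzRingType) n (D : 'M[R]_n) (c d : 'cV[R]_n) :
  (forall i j, i != j -> D i j = 0) ->
  (c^T *m D *m d) ord0 ord0 = \sum_i c i ord0 * D i i * d i ord0.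
Proof.
move=> D_diag; rewrite mxE; apply: eq_bigr => i _.
rewrite mxE (bigD1 i) //= big1 ?addr0; first by rewrite mxE.
by move=> j /negbTE ji; rewrite D_diag ?ji // mulr0.
Qed.

Lemma diag_quadratic_le0 (R : realDomainType) n (d c : 'I_n -> R) (i0 : 'I_n) :
  (forall i, i != i0 -> d i < 0) -> c i0 = 0 ->
  \sum_i c i * d i * c i <= 0 /\ (\sum_i c i * d i * c i = 0 -> forall i, c i = 0).
Proof.
move=> d_neg c0.
have term_le0 i : c i * d i * c i <= 0.
  have [->|/d_neg] := eqVneq i i0; first by rewrite c0 !mul0r.
  by nra.
split=> [|/eqP]; first exact: sumr_le0.
rewrite -oppr_eq0 -sumrN psumr_eq0 => [/allP all0 i|i _]; last by rewrite oppr_ge0.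
have [->//|/d_neg/ltr0_neq0/negbTE d0] := eqVneq i i0.
move: (all0 i (mem_index_enum i)); rewrite /= oppr_eq0 !mulf_eq0 d0 orbF orbb.
by move/eqP.
Qed.

Section HodgeIndex.
Variables (n : nat) (G : 'M[int]_n).
Hypotheses (G_sym : G^T = G) (G_hyp : hyperbolic G).

Lemma hyperbolic_neg_hyperplane : exists c : 'cV[rat]_n -> rat,
  (forall a b X Y, c (a *: X - b *: Y) = a * c X - b * c Y) /\
  forall X, c X = 0 -> formQ G X X <= 0 /\ (formQ G X X = 0 -> X = 0).
Proof.
have [P [P_unit [D_diag [i0 [_ D_neg]]]]] := G_hyp.
set D := P^T *m _ *m P in D_diag D_neg.
(* the coordinate along the positive vector of the diagonalising basis P *)
exists (fun X => (invmx P *m X) i0 ord0); split.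
  by move=> a b X Y; rewrite mulmxDr mulmxN -!scalemxAr !mxE.
move=> X X0; set c := invmx P *m X in X0.
have XE : X = P *m c by rewrite mulKVmx.
have formE : formQ G X X = \sum_i c i ord0 * D i i * c i ord0.
  by rewrite -diag_bilinear // /D /formQ {1 2}XE trmx_mul !mulmxA.
have [le0 eq0] := diag_quadratic_le0 (c := fun i => c i ord0) D_neg X0.
rewrite formE; split=> // /eq0 c_eq0; rewrite XE.
suff -> : c = 0 by rewrite mulmx0.
by apply/matrixP => i j; rewrite ord1 c_eq0 mxE.
Qed.

Lemma hodge_indexQ H Z : 0 < formQ G H H -> formQ G Z H = 0 ->
  formQ G Z Z <= 0 /\ (formQ G Z Z = 0 -> Z = 0).
Proof.
move=> HH ZH; have [c [c_lin neg_c]] := hyperbolic_neg_hyperplane.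
have cH : c H != 0 by apply/eqP => /neg_c[]; rewrite leNgt HH.
set Y := c H *: Z - c Z *: H.
have [Y_le0 Y_eq0] : formQ G Y Y <= 0 /\ (formQ G Y Y = 0 -> Y = 0).
  by apply: neg_c; rewrite c_lin mulrC subrr.
have YY : formQ G Y Y = c H ^+ 2 * formQ G Z Z + c Z ^+ 2 * formQ G H H.
  rewrite /Y !(formQDl, formQDr, formQNl, formQNr, formQZl, formQZr) ZH.
  by rewrite (formQC G_sym H Z) ZH; ring.
have cH2 : 0 < c H ^+ 2 by rewrite lt_def sqrf_eq0 cH sqr_ge0.
have cZ2 : 0 <= c Z ^+ 2 by rewrite sqr_ge0.
split=> [|ZZ]; first nra.
have cZ : c Z = 0.
  by apply/eqP; rewrite -sqrf_eq0; apply/eqP; move: Y_le0; rewrite YY ZZ; nra.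
move: (Y_eq0 ltac:(by rewrite YY ZZ cZ; ring)).
by rewrite /Y cZ scale0r subr0 => /eqP; rewrite scaler_eq0 (negbTE cH) => /eqP.
Qed.

Lemma hodge_index h z : 0 < lform G h h -> lform G z h = 0 ->
  lform G z z <= 0 /\ (lform G z z = 0 -> z = 0).
Proof.
move=> hh zh; have := @hodge_indexQ (toQ h) (toQ z).
rewrite -!lform_toQ ltr0z zh hh => /(_ isT erefl) [le0 eq0].
split=> [|zz]; first by rewrite -(lerz0 rat).
by apply: toQ_inj0; apply: eq0; rewrite zz.
Qed.

Lemma lform_reverse_CauchySchwarz h w : 0 < lform G h h ->
  lform G h h * lform G w w <= lform G w h ^+ 2.
Proof.
move=> hh; set z := lform G h h *: w - lform G w h *: h.
have zh : lform G z h = 0 by rewrite /z lformBl !lformZl mulrC subrr.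
have [+ _] := hodge_index hh zh.
rewrite /z !(lformBl, lformBr, lformZl, lformZr) (lformC G_sym h w); nia.
Qed.

End HodgeIndex.

Definition independent (T : eqType) (P : T -> Prop) (B : T -> T -> int) s :=
  [/\ uniq s, {in s, forall x, P x} & {in s &, forall x y, x <> y -> B x y = 0}].

Lemma independent_take (T : eqType) P B k (s : seq T) :
  independent P B s -> independent P B (take k s).
Proof.
case=> us Ps Bs; split; first exact: take_uniq.
  by move=> x /mem_take /Ps.
by move=> x y /mem_take xs /mem_take ys; apply: Bs.
Qed.

Lemma independent_size_le (T : eqType) P B K :
  (forall t : seq T, independent P B t -> size t = K.+1 -> False) ->
  forall s, independent P B s -> (size s <= K)%N.
Proof.
move=> no_big s indep_s; rewrite leqNgt; apply/negP => lt_K_s.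
by apply: (no_big (take K.+1 s)); [exact: independent_take | exact: size_takel].
Qed.

Lemma independentW (T : eqType) (P P' : T -> Prop) B (s : seq T) :
  (forall x, P' x -> P x) -> independent P' B s -> independent P B s.
Proof. by move=> P'P [us P's Bs]; split=> // x /P's /P'P. Qed.

Section InducedGraph.
Variables (T : eqType) (P : T -> Prop) (B : T -> T -> int).

Definition induced_iso m (M : 'I_m -> 'I_m -> int) :=
  exists f : 'I_m -> T, injective f /\ (forall l, P l <-> exists i, f i = l) /\
    (forall i j, i != j -> B (f i) (f j) = M i j).

Lemma enum_of_bounded K :
  (forall s, uniq s -> {in s, forall x, P x} -> (size s <= K)%N) ->
  exists s, uniq s /\ forall x, P x <-> x \in s.
Proof.
move=> bounded.
suff: forall d s, (K - size s < d)%N -> uniq s -> {in s, forall x, P x} ->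
    exists s', uniq s' /\ forall x, P x <-> x \in s'.
  by move/(_ K.+1 [::]); apply=> //=; rewrite subn0.
elim=> [|d IH] s; first by rewrite ltn0.
move=> lt_d us Ps.
case: (classic (forall x, P x -> x \in s)) => [sub|].
  exists s; split=> // z; split; [exact: sub | exact: Ps].
move=> /not_all_ex_not[x not_sub]; have [Px xs] := imply_to_and _ _ not_sub.
have uxs : uniq (x :: s) by rewrite /= us andbT; apply/negP.
have Pxs : {in x :: s, forall y, P y} by move=> y /predU1P[->|/Ps].
apply: (IH (x :: s)) => //; have := bounded _ uxs Pxs; move: lt_d => /=; lia.
Qed.

Lemma induced_iso_of_enum s M : uniq s -> (forall x, P x <-> x \in s) ->
  (forall i j : 'I_(size s), i != j ->
     B (tnth (in_tuple s) i) (tnth (in_tuple s) j) = M i j) ->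
  induced_iso M.
Proof.
move=> us Ps BM; exists (tnth (in_tuple s)); split; first exact/tuple_uniqP.
split=> // x; rewrite Ps; split=> [/seq_tnthP[i ->]|[i <-]]; first by exists i.
exact: mem_tnth.
Qed.

Hypothesis Bsym : forall x y, B x y = B y x.
Hypothesis Bself : forall x, P x -> B x x = -2.
Hypothesis Bpair : forall x y, P x -> P y -> x <> y -> B x y = 0 \/ B x y = 1.

Lemma edge_neq x y : P x -> B x y = 1 -> x <> y.
Proof. by move=> Px Bxy exy; move: Bxy; rewrite -exy Bself. Qed.

Lemma B_eq0_of_neq1 x y : P x -> P y -> x <> y -> B x y <> 1 -> B x y = 0.
Proof. by move=> Px Py xy; case: (Bpair Px Py xy). Qed.

Lemma edgeless_iso K : (forall x y, P x -> P y -> B x y <> 1) ->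
  (forall s, independent P B s -> (size s <= K)%N) ->
  exists a, (a <= K)%N /\ induced_iso (aA1 a).
Proof.
move=> no_edge bound.
have indep s : uniq s -> {in s, forall x, P x} -> independent P B s.
  by move=> us Ps; split=> // x y /Ps Px /Ps Py xy; apply: B_eq0_of_neq1 => //; apply: no_edge.
have [s [us Ps]] := enum_of_bounded (fun s us Ps => bound s (indep s us Ps)).
have Ps' : {in s, forall x, P x} by move=> x /Ps.
exists (size s); split; first exact/bound/indep.
apply: induced_iso_of_enum => // i j ij.
have [_ _ Bs] := indep s us Ps'.
have tinj : injective (tnth (in_tuple s)) by apply/tuple_uniqP.
by apply: Bs; rewrite ?mem_tnth // => /tinj eij; rewrite eij eqxx in ij.
Qed.

Definition at_most_one_edge := forall x y z w, P x -> P y -> P z -> P w ->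
  B x y = 1 -> B z w = 1 -> (z = x /\ w = y) \/ (z = y /\ w = x).

Lemma at_most_one_edge_of_P3_2K2 :
  (forall x y z, P x -> P y -> P z -> B x y = 1 -> B x z = 1 -> y <> z -> False) ->
  (forall x y z w, P x -> P y -> P z -> P w -> B x y = 1 -> B z w = 1 ->
     B x z = 0 -> B x w = 0 -> B y z = 0 -> B y w = 0 -> False) ->
  at_most_one_edge.
Proof.
move=> noP3 no2K2 x y z w Px Py Pz Pw Bxy Bzw.
have Byx : B y x = 1 by rewrite Bsym.
have nbr a b c : P a -> P b -> P c -> B a b = 1 -> B a c = 1 -> c = b.
  move=> Pa Pb Pc Bab Bac; have [//|/eqP cb] := eqVneq c b.
  by case: (noP3 a b c Pa Pb Pc Bab Bac (nesym cb)).
have off a b c : P a -> P b -> P c -> B a b = 1 -> c <> a -> c <> b -> B a c = 0.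
  move=> Pa Pb Pc Bab ca cb; apply: B_eq0_of_neq1 => // [ac|Bac]; first exact: ca.
  exact/cb/(nbr a).
have [zx|/eqP zx] := eqVneq z x; first by left; split=> //; subst z; apply: (nbr x).
have [zy|/eqP zy] := eqVneq z y; first by right; split=> //; subst z; apply: (nbr y).
have Bxz := off x y z Px Py Pz Bxy zx zy.
have Byz := off y x z Py Px Pz Byx zy zx.
have [wx|/eqP wx] := eqVneq w x; first by move: Bzw; rewrite wx Bsym Bxz.
have [wy|/eqP wy] := eqVneq w y; first by move: Bzw; rewrite wy Bsym Byz.
by case: (no2K2 x y z w Px Py Pz Pw Bxy Bzw Bxz (off x y w Px Py Pw Bxy wx wy)
  Byz (off y x w Py Px Pw Byx wy wx)).
Qed.

Section OneEdge.
Hypothesis one_edge : at_most_one_edge.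
Variables x y : T.
Hypotheses (Px : P x) (Py : P y) (Bxy : B x y = 1).

Definition off_edge z := (z != x) && (z != y).

Lemma off_edge_nonadjacent z : P z -> off_edge z -> [/\ P z, B x z = 0 & B y z = 0].
Proof.
move=> Pz /andP[/eqP zx /eqP zy].
split=> //; apply: B_eq0_of_neq1 => //; try exact: nesym.
  by move=> B1; case: (one_edge Px Py Px Pz Bxy B1) => -[].
by move=> B1; case: (one_edge Px Py Py Pz Bxy B1) => -[].
Qed.

Lemma off_edge_independent s : uniq s -> {in s, forall z, P z} ->
  independent (fun z => [/\ P z, B x z = 0 & B y z = 0]) B [seq z <- s | off_edge z].
Proof.
move=> us Ps; split; first exact: filter_uniq.
  by move=> z; rewrite mem_filter => /andP[xyz /Ps Pz]; apply: off_edge_nonadjacent.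
move=> z w; rewrite !mem_filter => /andP[/andP[/eqP zx /eqP zy] /Ps Pz].
move=> /andP[_ /Ps Pw] zw; apply: B_eq0_of_neq1 => // B1.
by case: (one_edge Px Py Pz Pw Bxy B1) => -[].
Qed.

Lemma edge_iso s : uniq (x :: y :: s) -> (forall z, P z <-> z \in x :: y :: s) ->
  induced_iso (A2aA1 (size s)).
Proof.
move=> us Ps; apply: (@induced_iso_of_enum (x :: y :: s)) => // i j ij.
set t := in_tuple _.
have tP k : P (tnth t k) by apply/Ps/mem_tnth.
have tnth_eq k (m : 'I_(size s).+2) : (tnth t k == tnth t m) = (k == m).
  exact/inj_eq/tuple_uniqP.
have t0 k : (tnth t k == x) = (val k == 0%N) by rewrite -[x]/(tnth t ord0) tnth_eq.
have t1 k : (tnth t k == y) = (val k == 1%N).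
  by rewrite -[y]/(tnth t (lift ord0 ord0)) tnth_eq.
rewrite /A2aA1 -!t0 -!t1.
have tij : tnth t i <> tnth t j by move/eqP; rewrite tnth_eq (negbTE ij).
have [B1|nB1] := eqVneq (B (tnth t i) (tnth t j)) 1.
  rewrite B1; case: (one_edge Px Py (tP i) (tP j) Bxy B1) => -[-> ->].
    by rewrite !eqxx.
  by rewrite !eqxx orbT.
rewrite B_eq0_of_neq1 //; last exact/eqP.
case: ifP => // /orP[]/andP[/eqP ti /eqP tj]; move: nB1; rewrite ti tj.
  by rewrite Bxy.
by rewrite Bsym Bxy.
Qed.

End OneEdge.

Lemma induced_iso_A2aA1_or_aA1 K0 K1 : at_most_one_edge ->
  (forall s, independent P B s -> (size s <= K0)%N) ->
  (forall x y s, P x -> P y -> B x y = 1 ->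
     independent (fun z => [/\ P z, B x z = 0 & B y z = 0]) B s -> (size s <= K1)%N) ->
  (exists a, (a <= K1)%N /\ induced_iso (A2aA1 a)) \/
  (exists a, (a <= K0)%N /\ induced_iso (aA1 a)).
Proof.
move=> one_edge bound0 bound1.
case: (classic (exists x y, [/\ P x, P y & B x y = 1])) => [[x [y [Px Py Bxy]]]|no_edge].
  left.
  have bound s : uniq s -> {in s, forall z, P z} ->
      (size [seq z <- s | off_edge x y z] <= K1)%N.
    by move=> us Ps; apply: (bound1 x y) => //; apply: off_edge_independent.
  have [s [us Ps]] : exists s, uniq s /\ forall z, P z <-> z \in s.
    apply: (@enum_of_bounded K1.+2) => s us Ps.
    apply: (@leq_trans (size [:: x, y & [seq z <- s | off_edge x y z]])).
      apply: (uniq_leq_size us) => z zs.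
      by rewrite !inE mem_filter zs /off_edge andbT; case: (z == x); case: (z == y).
    exact: bound.
  set r := [seq z <- s | off_edge x y z].
  have Ps' : {in s, forall z, P z} by move=> z /Ps.
  exists (size r); split; first exact: bound us Ps'.
  have nxy : x != y by apply/eqP; apply: (edge_neq Px Bxy).
  apply: (edge_iso one_edge Px Py Bxy).
    by rewrite /= inE /r !mem_filter /off_edge !eqxx andbF (negbTE nxy) filter_uniq.
  move=> z; rewrite Ps !inE /r mem_filter /off_edge.
  by case: eqVneq => [->|_]; case: eqVneq => [->|] //=; rewrite -!Ps.
right; apply: edgeless_iso bound0 => x y Px Py Bxy.
by apply: no_edge; exists x, y.
Qed.

End InducedGraph.

Section WeylChamber.
Variables (n : nat) (G : 'M[int]_n) (h : 'cV[int]_n) (v : 'cV[rat]_n).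

Lemma integral_chamber_vector : exists V : 'cV[int]_n,
  forall r, 0 < formQ G (toQ r) v -> 0 < lform G r V.
Proof.
pose D := \prod_i denq (v i ord0).
pose V := \col_i (numq (v i ord0) * \prod_(j | j != i) denq (v j ord0)) : 'cV[int]_n.
have D_pos : 0 < D by apply: prodr_gt0 => i _; exact: denq_gt0.
have VE : toQ V = D%:~R *: v.
  apply/matrixP => i j; rewrite (ord1 j) !mxE rmorphM /= numqE rmorph_prod /=.
  by rewrite /D rmorph_prod /= [in RHS](bigD1 i) //= -[v i 0]/(v i ord0); ring.
exists V => r rv; rewrite -(ltr0z rat) lform_toQ VE formQZr.
by apply: mulr_gt0 rv; rewrite ltr0z.
Qed.

Definition nonneg_on_pos_roots a := forall r, pos_root G h v r -> 0 <= lform G a r.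

Lemma nonneg_on_pos_roots_of_simple a :
  (forall e, simple_root G h v e -> 0 <= lform G a e) -> nonneg_on_pos_roots a.
Proof.
move=> a_simple; have [V V_pos] := integral_chamber_vector.
(* Induction on the height r.V: a non-simple positive root is the sum of two
   positive roots of smaller height. *)
suff ind k r : (absz (lform G r V) <= k)%N -> pos_root G h v r -> 0 <= lform G a r.
  by move=> r; apply: ind.
elim: k r => [|k IH] r r_k r_pos; have := V_pos _ r_pos.2.
  by move: r_k; lia.
move=> _; case: (classic (simple_root G h v r)) => [|not_simple]; first exact: a_simple.
have [r1 [r2 [r1_pos [r2_pos r_eq]]]] :
    exists r1 r2, pos_root G h v r1 /\ pos_root G h v r2 /\ r = r1 + r2.
  by apply: NNPP => no_split; apply: not_simple; split.
have := V_pos _ r1_pos.2; have := V_pos _ r2_pos.2.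
move: r_k; rewrite r_eq lformDl lformDr => r_k r2V r1V.
by apply: addr_ge0; [apply: IH r1_pos | apply: IH r2_pos]; lia.
Qed.

Lemma line_nonneg l : is_line G h v l -> nonneg_on_pos_roots l.
Proof. by move=> [_]; apply: nonneg_on_pos_roots_of_simple. Qed.

Hypothesis v_generic : weyl_generic G h v.

Lemma no_separating_root a b r : nonneg_on_pos_roots a -> nonneg_on_pos_roots b ->
  is_root_n G h 0 r -> lform G a r < 0 -> 0 < lform G b r -> False.
Proof.
move=> a_nneg b_nneg r_root ar br.
have [r_neg|r_pos|r0] := ltgtP (formQ G (toQ r) v) 0; last first.
- by move: (v_generic r_root); rewrite r0 eqxx.
- by have := a_nneg r (conj r_root r_pos); rewrite leNgt ar.
have [rr rh] := r_root.
have : pos_root G h v (- r).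
  split; first by split; rewrite ?lformNl ?lformNr ?opprK ?rr ?rh ?oppr0.
  by rewrite /toQ map_mxN formQNl oppr_gt0.
by move/b_nneg; rewrite lformNr oppr_ge0 leNgt br.
Qed.

End WeylChamber.

Ltac lform_arith G_sym :=
  rewrite ?(lformDl, lformDr, lformBl, lformBr, lformNl, lformNr, lformZl, lformZr);
  repeat match goal with
  | H : lform _ ?a ?b = _ |- context [lform _ ?a ?b] => rewrite H
  | H : lform _ ?a ?b = _ |- context [lform _ ?b ?a] => rewrite (lformC G_sym b a) H
  end; lia.

Section Geometry.
Variables (n : nat) (G : 'M[int]_n) (h : 'cV[int]_n) (v : 'cV[rat]_n).
Hypotheses (G_sym : G^T = G) (G_hyp : hyperbolic G) (hh : lform G h h = 8).
Hypotheses (adm : two_admissible G h) (v_generic : weyl_generic G h v).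

Local Notation lf := (lform G).
Local Notation star e := (in_star G h v e).
Local Notation indep e := (independent (in_star G h v e) (lform G)).

Lemma hodge_ineq w : 8 * lf w w <= lf w h ^+ 2.
Proof. by rewrite -hh; apply: lform_reverse_CauchySchwarz; rewrite ?hh. Qed.

Lemma lform_lines l1 l2 : is_line G h v l1 -> is_line G h v l2 -> l1 <> l2 ->
  lf l1 l2 = 0 \/ lf l1 l2 = 1.
Proof.
move=> L1 L2 l12; have N1 := line_nonneg L1; have N2 := line_nonneg L2.
move: L1 L2 => [[l1l1 l1h] _] [[l2l2 l2h] _].
set k := lf l1 l2; have l2l1 : lf l2 l1 = k by rewrite lformC.
have le2 : k <= 2 by have := hodge_ineq (l1 + l2); lform_arith G_sym.
have ne2 : k <> 2 by move=> k2; apply: (adm (l1 + l2)).2; split; lform_arith G_sym.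
have [diff_le0 diff_eq0] := hodge_index G_sym G_hyp (h := h) (z := l1 - l2)
  ltac:(by rewrite hh) ltac:(by lform_arith G_sym).
have geN2 : -2 <= k by move: diff_le0; lform_arith G_sym.
have neN2 : k <> -2.
  move=> kN2; apply: l12; apply/eqP; rewrite -subr_eq0; apply/eqP/diff_eq0.
  by lform_arith G_sym.
have neN1 : k <> -1.
  move=> kN1; apply: (no_separating_root v_generic N1 N2 (r := l1 - l2));
  [split|..]; lform_arith G_sym.
lia.
Qed.

Lemma star_self e x : star e x -> lf x x = -2.
Proof. by case=> [[[]]]. Qed.

Lemma star_lform_neq e x z : star e x -> lf x z <> -2 -> z <> x.
Proof. by move=> Px xz zx; apply: xz; rewrite zx (star_self Px). Qed.

Lemma star_pair e x y : star e x -> star e y -> x <> y -> lf x y = 0 \/ lf x y = 1.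
Proof. by move=> [Lx _] [Ly _]; apply: lform_lines. Qed.

Lemma lform_sum_const (t : seq 'cV[int]_n) y c : {in t, forall z, lf z y = c} ->
  lf (\sum_(z <- t) z) y = c * (size t)%:Z.
Proof.
elim: t => [|a t IH] tc; first by rewrite big_nil lform0l mulr0.
rewrite big_cons lformDl tc ?mem_head // IH => [|z zt]; last by rewrite tc // inE zt orbT.
by rewrite /=; lia.
Qed.

Lemma lform_sum_mem (t : seq 'cV[int]_n) z : uniq t -> z \in t ->
  {in t, forall w, w <> z -> lf w z = 0} -> lf (\sum_(w <- t) w) z = lf z z.
Proof.
move=> ut zt t_orth; rewrite lform_suml (bigD1_seq z) //= big1_seq ?addr0 //.
by move=> w /andP[/eqP wz wt]; apply: t_orth.
Qed.

Lemma lform_sum_star e (t : seq 'cV[int]_n) : indep e t ->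
  let S := \sum_(w <- t) w in
  [/\ lf S S = -2 * (size t)%:Z, lf S h = (size t)%:Z & lf S e = (size t)%:Z].
Proof.
case=> ut t_star t_orth S; rewrite {}/S; split.
- apply: lform_sum_const => z zt; rewrite lformC // lform_sum_mem //.
    exact/star_self/t_star.
  by move=> w wt; apply: t_orth.
- by rewrite (@lform_sum_const _ _ 1) ?mul1r // => z /t_star[[[_ ->]]].
- by rewrite (@lform_sum_const _ _ 1) ?mul1r // => z /t_star[_ ->].
Qed.

Section LineStar.
Variable e : 'cV[int]_n.
Hypotheses (ee : lf e e = -2) (eh : lf e h = 1) (e_nneg : nonneg_on_pos_roots G h v e).

Lemma line_star_no_P3 x y z : star e x -> star e y -> star e z ->
  lf x y = 1 -> lf x z = 1 -> y <> z -> False.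
Proof.
move=> [[[xx xh] _] xe] Py Pz xy xz yz; have := star_pair Py Pz yz.
move: Py Pz => [[[yy yh] _] ye] [[[zz zh] _] ze] [yz0|yz1].
  by apply: (adm (h - 2%:Z *: e - 2%:Z *: x - y - z)).2; split; lform_arith G_sym.
by have := hodge_ineq (2%:Z *: e + 2%:Z *: x + y + z); lform_arith G_sym.
Qed.

Lemma line_star_no_2K2 x y z w : star e x -> star e y -> star e z -> star e w ->
  lf x y = 1 -> lf z w = 1 -> lf x z = 0 -> lf x w = 0 -> lf y z = 0 -> lf y w = 0 ->
  False.
Proof.
move=> [[[xx xh] _] xe] [[[yy yh] _] ye] [[[zz zh] _] ze] [[[ww wh] _] we].
move=> xy zw xz xw yz yw.
by apply: (adm (h - 2%:Z *: e - x - y - z - w)).2; split; lform_arith G_sym.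
Qed.

Lemma line_star_indep_size t : indep e t -> (size t = 9)%N -> False.
Proof.
move=> t_indep t9; have [SS Sh Se] := lform_sum_star t_indep; rewrite t9 in SS Sh Se.
by have := hodge_ineq (4%:Z *: e + \sum_(w <- t) w); lform_arith G_sym.
Qed.

Lemma line_star_off_edge_indep_size x y t :
  star e x -> star e y -> lf x y = 1 ->
  independent (fun z => [/\ star e z, lf x z = 0 & lf y z = 0]) lf t ->
  (size t = 4)%N -> False.
Proof.
move=> [[[xx xh] _] xe] [[[yy yh] _] ye] xy t_indep t4.
have [ut t_P t_orth] := t_indep.
have [SS Sh Se] := lform_sum_star (independentW (fun z => fun '(And3 Pz _ _) => Pz) t_indep).
set z := nth 0 t 0; have tz : z \in t by rewrite mem_nth // t4.
have [[z_line ze] xz yz] := t_P z tz; have [[zz zh] _] := z_line.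
have Sz : lf (\sum_(w <- t) w) z = -2 by rewrite lform_sum_mem // => w wt; apply: t_orth.
have Sx : lf (\sum_(w <- t) w) x = 0.
  by rewrite (@lform_sum_const _ _ 0) ?mul0r // => w /t_P[_ xw _]; rewrite lformC.
have Sy : lf (\sum_(w <- t) w) y = 0.
  by rewrite (@lform_sum_const _ _ 0) ?mul0r // => w /t_P[_ _ yw]; rewrite lformC.
rewrite t4 in SS Sh Se.
apply: (no_separating_root v_generic (line_nonneg z_line) e_nneg
  (r := - h + 2%:Z *: e + x + y + \sum_(w <- t) w)); [split|..]; lform_arith G_sym.
Qed.

Hypothesis adm3 : forall w, ~ isotropic G h 3 w.

Lemma line_star_no_edge_adm3 x y : star e x -> star e y -> lf x y <> 1.
Proof.
move=> [[[xx xh] _] xe] [[[yy yh] _] ye] xy.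
by apply: (adm3 (w := e + x + y)); split; lform_arith G_sym.
Qed.

Lemma line_star_indep_size_adm3 t : indep e t -> (size t = 8)%N -> False.
Proof.
move=> t_indep t8; have [SS Sh Se] := lform_sum_star t_indep; rewrite t8 in SS Sh Se.
by apply: (adm3 (w := - h + 3%:Z *: e + \sum_(w <- t) w)); split; lform_arith G_sym.
Qed.

End LineStar.

Section ExceptionalStar.
Variable e : 'cV[int]_n.
Hypotheses (ee : lf e e = -2) (eh : lf e h = 0).

Lemma exceptional_star_no_edge x y : star e x -> star e y -> lf x y <> 1.
Proof.
move=> [[[xx xh] _] xe] [[[yy yh] _] ye] xy.
by apply: (adm (e + x + y)).2; split; lform_arith G_sym.
Qed.

Lemma exceptional_star_indep_size t : indep e t -> (size t = 6)%N -> False.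
Proof.
move=> t_indep t6; have [SS Sh Se] := lform_sum_star t_indep; rewrite t6 in SS Sh Se.
by have := hodge_ineq (3%:Z *: e + \sum_(w <- t) w); lform_arith G_sym.
Qed.

End ExceptionalStar.

Section Isotropic3Star.
Variable e : 'cV[int]_n.
Hypotheses (ee : lf e e = 0) (eh : lf e h = 3) (e_nneg : nonneg_on_pos_roots G h v e).

Lemma isotropic3_star_no_third x y z : star e x -> star e y -> star e z ->
  lf x y = 1 -> z <> x -> z <> y -> False.
Proof.
move=> Px Py Pz xy zx zy.
have := star_pair Px Pz (nesym zx); have := star_pair Py Pz (nesym zy).
have [z_line _] := Pz.
move: Px Py Pz => [[[xx xh] _] xe] [[[yy yh] _] ye] [[[zz zh] _] ze] [yz|yz] [xz|xz].
- apply: (no_separating_root v_generic (line_nonneg z_line) e_nneg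
    (r := h - 2%:Z *: e - x - y)); [split|..]; lform_arith G_sym.
- by apply: (adm (h - e - x - y - z)).2; split; lform_arith G_sym.
- by apply: (adm (h - e - x - y - z)).2; split; lform_arith G_sym.
- by have := hodge_ineq (e + x + y + z); lform_arith G_sym.
Qed.

Lemma isotropic3_star_indep_size t : indep e t -> (size t = 10)%N -> False.
Proof.
move=> t_indep t10; have [SS Sh Se] := lform_sum_star t_indep; rewrite t10 in SS Sh Se.
by have := hodge_ineq (5%:Z *: e + \sum_(w <- t) w); lform_arith G_sym.
Qed.

End Isotropic3Star.

Lemma star_edgeless_iso e K : (forall x y, star e x -> star e y -> lf x y <> 1) ->
  (forall t, indep e t -> size t = K.+1 -> False) ->
  exists a, (a <= K)%N /\ star_iso G h v e (aA1 a).
Proof.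
move=> no_edge no_big.
have [a [le_aK iso]] := edgeless_iso (@star_pair e) no_edge (independent_size_le no_big).
by exists a.
Qed.

Lemma line_star e : is_line G h v e ->
  (exists a : nat, (a <= 3)%N /\ star_iso G h v e (A2aA1 a)) \/
  (exists a : nat, (a <= 8)%N /\ star_iso G h v e (aA1 a)).
Proof.
move=> e_line; have [[ee eh] _] := e_line.
have one_edge : at_most_one_edge (star e) lf.
  apply: at_most_one_edge_of_P3_2K2 (lformC G_sym) (@star_pair e) _ _.
    exact: line_star_no_P3.
  exact: line_star_no_2K2.
apply: (induced_iso_A2aA1_or_aA1 (lformC G_sym) (@star_self e) (@star_pair e) one_edge).
  exact/independent_size_le/line_star_indep_size.
move=> x y s Px Py xy; apply: independent_size_le.
move=> t; have e_nneg := line_nonneg e_line.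
exact: (line_star_off_edge_indep_size (t := t) ee eh e_nneg Px Py xy).
Qed.

Lemma line_star_adm3 : three_admissible G h -> forall e, is_line G h v e ->
  exists a : nat, (a <= 7)%N /\ star_iso G h v e (aA1 a).
Proof.
move=> [_ adm3] e [[ee eh] _]; apply: star_edgeless_iso.
  exact: line_star_no_edge_adm3.
exact: line_star_indep_size_adm3.
Qed.

Lemma exceptional_star e : simple_root G h v e ->
  exists a : nat, (a <= 5)%N /\ star_iso G h v e (aA1 a).
Proof.
move=> [[[ee eh] _] _]; apply: star_edgeless_iso.
  exact: exceptional_star_no_edge.
exact: exceptional_star_indep_size.
Qed.

Lemma isotropic3_star e : in_Pbar G h v e -> isotropic G h 3 e ->
  star_iso G h v e (A2aA1 0) \/
  exists a : nat, (a <= 9)%N /\ star_iso G h v e (aA1 a).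
Proof.
move=> [_ [_ [e_nneg _]]] [ee eh].
have no_third := isotropic3_star_no_third ee eh e_nneg.
have no_third_orth x y z : star e x -> star e y -> star e z ->
    lf x y = 1 -> lf x z = 0 -> lf y z = 0 -> False.
  move=> Px Py Pz xy xz yz; apply: (no_third x y z) => //.
    by apply: (star_lform_neq Px); rewrite xz.
  by apply: (star_lform_neq Py); rewrite yz.
have one_edge : at_most_one_edge (star e) lf.
  apply: at_most_one_edge_of_P3_2K2 (lformC G_sym) (@star_pair e) _ _.
    move=> x y z Px Py Pz xy xz /nesym zy; apply: (no_third x y z) => //.
    by apply: (star_lform_neq Px); rewrite xz.
  by move=> x y z w Px Py Pz _ xy _ xz _ yz _; apply: (no_third_orth x y z).
have bound1 x y s : star e x -> star e y -> lf x y = 1 ->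
    independent (fun z => [/\ star e z, lf x z = 0 & lf y z = 0]) lf s -> (size s <= 0)%N.
  move=> Px Py xy; apply: independent_size_le => -[|z [|//]] // [_ s_P _] _.
  by have [Pz xz yz] := s_P z (mem_head _ _); apply: (no_third_orth x y z).
have [[a [+ iso]]|] := induced_iso_A2aA1_or_aA1 (lformC G_sym) (@star_self e)
  (@star_pair e) one_edge (independent_size_le (isotropic3_star_indep_size ee eh)) bound1.
  by rewrite leqn0 => /eqP a0; left; rewrite -a0.
by right.
Qed.

End Geometry.

Theorem lemma5p1 (n : nat) (G : 'M[int]_n) (h : 'cV[int]_n) (v : 'cV[rat]_n) :
  even_lattice G -> hyperbolic G -> lform G h h = 8 ->
  two_admissible G h -> weyl_generic G h v ->
  (* (1) *)
  (forall e, is_line G h v e ->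
     (exists a : nat, (a <= 3)%N /\ star_iso G h v e (A2aA1 a)) \/
     (exists a : nat, (a <= 8)%N /\ star_iso G h v e (aA1 a))) /\
  (* (2) *)
  (three_admissible G h -> forall e, is_line G h v e ->
     exists a : nat, (a <= 7)%N /\ star_iso G h v e (aA1 a)) /\
  (* (3) *)
  (forall e, simple_root G h v e ->
     exists a : nat, (a <= 5)%N /\ star_iso G h v e (aA1 a)) /\
  (* (4) *)
  (forall e, in_Pbar G h v e -> isotropic G h 3 e ->
     star_iso G h v e (A2aA1 0) \/
     exists a : nat, (a <= 9)%N /\ star_iso G h v e (aA1 a)).
Proof.
move=> [G_sym _] G_hyp hh adm v_generic.
split; first exact: line_star.
split; first exact: line_star_adm3.
split; first exact: exceptional_star.
exact: isotropic3_star.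
Qed.
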